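(* Let $A$ be a Banach algebra with $\mathrm{Ann}_l(A)=\{0\}$ and let $a_0\in Z(A)\setminus\{0\}$. Then for each integer $n\geq 3$, $S_{n}(A)$ is a commutative Banach subalgebra of $B(A)$.
   Context: $Z(A)$ is the center of $A$; $\mathrm{Ann}_l(A)=\{a\in A: ab=0\text{ for all }b\in A\}$. $Mul_n(A)$ is the set of bounded linear maps $T:A\to A$ with $T(a_1\cdots a_n)=a_1T(a_2\cdots a_n)=T(a_1\cdots a_{n-1})a_n$ for all $a_i\in A$. For $T\in Mul_n(A)$ let $T_{a_0,n}\in B(A)$ be $T_{a_0,n}(a)=T(a_0^{n-2}a)$; $M_{a_0,n}(A)=\{T_{a_0,n}:T\in Mul_n(A)\}$, and $S_n(A)$ is the closure of $M_{a_0,n}(A)$ in $B(A)$ in the operator norm. *)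

From Stdlib Require Import Reals.
Open Scope R_scope.

Record BanachAlgebra := {
  ba_car :> Type;
  ba_zero : ba_car;
  ba_add : ba_car -> ba_car -> ba_car;
  ba_opp : ba_car -> ba_car;
  ba_scal : R -> ba_car -> ba_car;
  ba_mul : ba_car -> ba_car -> ba_car;
  ba_norm : ba_car -> R;
  ba_addA : forall x y z, ba_add x (ba_add y z) = ba_add (ba_add x y) z;
  ba_addC : forall x y, ba_add x y = ba_add y x;
  ba_add0 : forall x, ba_add x ba_zero = x;
  ba_addN : forall x, ba_add x (ba_opp x) = ba_zero;
  ba_scalA : forall r s x, ba_scal r (ba_scal s x) = ba_scal (r * s) x;
  ba_scal1 : forall x, ba_scal 1 x = x;
  ba_scalDr : forall r x y, ba_scal r (ba_add x y) = ba_add (ba_scal r x) (ba_scal r y);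
  ba_scalDl : forall r s x, ba_scal (r + s) x = ba_add (ba_scal r x) (ba_scal s x);
  ba_mulA : forall x y z, ba_mul x (ba_mul y z) = ba_mul (ba_mul x y) z;
  ba_mulDl : forall x y z, ba_mul (ba_add x y) z = ba_add (ba_mul x z) (ba_mul y z);
  ba_mulDr : forall x y z, ba_mul x (ba_add y z) = ba_add (ba_mul x y) (ba_mul x z);
  ba_scal_mull : forall r x y, ba_scal r (ba_mul x y) = ba_mul (ba_scal r x) y;
  ba_scal_mulr : forall r x y, ba_scal r (ba_mul x y) = ba_mul x (ba_scal r y);
  ba_norm_eq0 : forall x, ba_norm x = 0 -> x = ba_zero;
  ba_norm_tri : forall x y, ba_norm (ba_add x y) <= ba_norm x + ba_norm y;
  ba_norm_scal : forall r x, ba_norm (ba_scal r x) = Rabs r * ba_norm x;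
  ba_norm_mul : forall x y, ba_norm (ba_mul x y) <= ba_norm x * ba_norm y;
  ba_complete : forall u : nat -> ba_car,
    (forall eps, eps > 0 -> exists N, forall p q, (p >= N)%nat -> (q >= N)%nat ->
        ba_norm (ba_add (u p) (ba_opp (u q))) < eps) ->
    exists l, forall eps, eps > 0 -> exists N, forall p, (p >= N)%nat ->
        ba_norm (ba_add (u p) (ba_opp l)) < eps
}.

Arguments ba_zero {_}.
Arguments ba_add {_}.
Arguments ba_opp {_}.
Arguments ba_scal {_}.
Arguments ba_mul {_}.
Arguments ba_norm {_}.

Section Defs.
Variable A : BanachAlgebra.

Definition ba_sub (x y : A) : A := ba_add x (ba_opp y).

Definition in_center (a : A) : Prop := forall b : A, ba_mul a b = ba_mul b a.

Definition left_annihilator_trivial : Prop :=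
  forall a : A, (forall b : A, ba_mul a b = ba_zero) -> a = ba_zero.

Definition bounded_linear (T : A -> A) : Prop :=
  (forall x y, T (ba_add x y) = ba_add (T x) (T y)) /\
  (forall r x, T (ba_scal r x) = ba_scal r (T x)) /\
  (exists M, forall x, ba_norm (T x) <= M * ba_norm x).

(* prodf a i k = a_i a_(i+1) ... a_(i+k)   (k+1 factors) *)
Fixpoint prodf (a : nat -> A) (i k : nat) : A :=
  match k with
  | O => a i
  | S k' => ba_mul (a i) (prodf a (S i) k')
  end.

(* Mul_n(A): T(a_1...a_n) = a_1 T(a_2...a_n) = T(a_1...a_(n-1)) a_n *)
Definition is_n_multiplier (n : nat) (T : A -> A) : Prop :=
  bounded_linear T /\
  forall a : nat -> A,
    T (prodf a 1 (n - 1)) = ba_mul (a 1%nat) (T (prodf a 2 (n - 2))) /\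
    T (prodf a 1 (n - 1)) = ba_mul (T (prodf a 1 (n - 2))) (a n).

(* a0^k a, written as k-fold left multiplication by a0 *)
Fixpoint lpow (a0 : A) (k : nat) (x : A) : A :=
  match k with
  | O => x
  | S k' => ba_mul a0 (lpow a0 k' x)
  end.

Definition T_a0n (a0 : A) (n : nat) (T : A -> A) : A -> A :=
  fun x => T (lpow a0 (n - 2) x).

Definition M_a0n (a0 : A) (n : nat) (U : A -> A) : Prop :=
  exists T, is_n_multiplier n T /\ forall x, U x = T_a0n a0 n T x.

(* ||U - V||_op <= eps, written out: ||U x - V x|| <= eps ||x|| for all x *)
Definition opdist_le (U V : A -> A) (eps : R) : Prop :=
  forall x, ba_norm (ba_sub (U x) (V x)) <= eps * ba_norm x.

Definition op_closure (S : (A -> A) -> Prop) (U : A -> A) : Prop :=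
  bounded_linear U /\
  forall eps, eps > 0 -> exists V, S V /\ opdist_le U V eps.

Definition S_n (a0 : A) (n : nat) : (A -> A) -> Prop := op_closure (M_a0n a0 n).

(* commutative Banach (= operator-norm closed) subalgebra of B(A) *)
Definition is_commutative_Banach_subalgebra (S : (A -> A) -> Prop) : Prop :=
  (forall U, S U -> bounded_linear U) /\
  S (fun _ => ba_zero) /\
  (forall U V, S U -> S V -> S (fun x => ba_add (U x) (V x))) /\
  (forall r U, S U -> S (fun x => ba_scal r (U x))) /\
  (forall U V, S U -> S V -> S (fun x => U (V x))) /\
  (forall U, op_closure S U -> S U) /\
  (forall U V, S U -> S V -> forall x, U (V x) = V (U x)).

End Defs.

(* For T in Mul_n(A) and central a0, the operator T_{a0,n} is a two-sided
   multiplier, U(xy) = x U(y) = U(x) y: feed the defining identities of T the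
   word a0 ... a0 x y, resp. x a0 ... a0 y, and move x past the central a0.
   Two such multipliers commute once Ann_l(A) = {0}, since
   (UV z - VU z) b = UV(zb) - VU(zb) and UV(xy) = U(x) V(y) = VU(xy).
   M_{a0,n}(A) is a linear space, closed under composition because
   U o T_{a0,n}(T') = T_{a0,n}(U o T'), and commutative; all of this passes to
   the operator-norm closure, composition being jointly continuous. *)

From Stdlib Require Import Reals Lra Lia Arith.
Open Scope R_scope.

Section BanachAlgebraFacts.
Context {A : BanachAlgebra}.

Lemma ba_add0l (x : A) : ba_add ba_zero x = x.
Proof. rewrite ba_addC; apply ba_add0. Qed.

Lemma ba_addNl (x : A) : ba_add (ba_opp x) x = ba_zero.
Proof. rewrite ba_addC; apply ba_addN. Qed.

Lemma ba_addKl (x y : A) : ba_add (ba_opp x) (ba_add x y) = y.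
Proof. rewrite ba_addA, ba_addNl, ba_add0l; reflexivity. Qed.

Lemma ba_addI (x y z : A) : ba_add x y = ba_add x z -> y = z.
Proof. intro E; rewrite <- (ba_addKl x y), E, ba_addKl; reflexivity. Qed.

Lemma ba_opp_unique (x y : A) : ba_add x y = ba_zero -> y = ba_opp x.
Proof. intro E; apply (ba_addI x); rewrite E, ba_addN; reflexivity. Qed.

Lemma ba_oppK (x : A) : ba_opp (ba_opp x) = x.
Proof. symmetry; apply ba_opp_unique, ba_addNl. Qed.

Lemma ba_addACA (a b c d : A) :
  ba_add (ba_add a b) (ba_add c d) = ba_add (ba_add a c) (ba_add b d).
Proof.
  rewrite <- !ba_addA; f_equal; rewrite !ba_addA, (ba_addC _ b c); reflexivity.
Qed.

Lemma ba_oppD (x y : A) : ba_opp (ba_add x y) = ba_add (ba_opp x) (ba_opp y).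
Proof.
  symmetry; apply ba_opp_unique.
  rewrite ba_addACA, !ba_addN, ba_add0; reflexivity.
Qed.

Lemma ba_subrr (x : A) : ba_sub A x x = ba_zero.
Proof. apply ba_addN. Qed.

Lemma ba_sub_eq0 (x y : A) : ba_sub A x y = ba_zero -> x = y.
Proof.
  intro E; apply ba_opp_unique in E.
  rewrite <- (ba_oppK x), <- E, ba_oppK; reflexivity.
Qed.

Lemma ba_sub_add_sub (a b c : A) :
  ba_add (ba_sub A a b) (ba_sub A b c) = ba_sub A a c.
Proof.
  unfold ba_sub.
  rewrite <- ba_addA, (ba_addA _ (ba_opp b)), ba_addNl, ba_add0l; reflexivity.
Qed.

Lemma ba_sub_add2 (a b c d : A) :
  ba_sub A (ba_add a b) (ba_add c d) = ba_add (ba_sub A a c) (ba_sub A b d).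
Proof. unfold ba_sub; rewrite ba_oppD; apply ba_addACA. Qed.

Lemma ba_scal0l (x : A) : ba_scal 0 x = ba_zero.
Proof.
  symmetry; apply (ba_addI (ba_scal 0 x)).
  rewrite <- ba_scalDl, Rplus_0_r, ba_add0; reflexivity.
Qed.

Lemma ba_scalN1 (x : A) : ba_scal (- (1)) x = ba_opp x.
Proof.
  apply ba_opp_unique; rewrite <- (ba_scal1 _ x) at 1.
  rewrite <- ba_scalDl, Rplus_opp_r, ba_scal0l; reflexivity.
Qed.

Lemma ba_scal0r (r : R) : ba_scal r (@ba_zero A) = ba_zero.
Proof. rewrite <- (ba_scal0l ba_zero), ba_scalA, Rmult_0_r; reflexivity. Qed.

Lemma ba_scal_sub (r : R) (x y : A) :
  ba_sub A (ba_scal r x) (ba_scal r y) = ba_scal r (ba_sub A x y).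
Proof.
  unfold ba_sub.
  rewrite ba_scalDr, <- !ba_scalN1, !ba_scalA, (Rmult_comm (- (1)) r).
  reflexivity.
Qed.

Lemma ba_mul0l (x : A) : ba_mul ba_zero x = ba_zero.
Proof.
  symmetry; apply (ba_addI (ba_mul ba_zero x)).
  rewrite <- ba_mulDl, !ba_add0; reflexivity.
Qed.

Lemma ba_mul0r (x : A) : ba_mul x ba_zero = ba_zero.
Proof.
  symmetry; apply (ba_addI (ba_mul x ba_zero)).
  rewrite <- ba_mulDr, !ba_add0; reflexivity.
Qed.

Lemma ba_mul_subl (x y z : A) :
  ba_mul (ba_sub A x y) z = ba_sub A (ba_mul x z) (ba_mul y z).
Proof.
  unfold ba_sub; rewrite ba_mulDl; f_equal.
  apply ba_opp_unique; rewrite <- ba_mulDl, ba_addN, ba_mul0l; reflexivity.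
Qed.

Lemma ba_norm0 : ba_norm (@ba_zero A) = 0.
Proof.
  rewrite <- (ba_scal0l ba_zero), ba_norm_scal, Rabs_R0, Rmult_0_l; reflexivity.
Qed.

Lemma ba_normN (x : A) : ba_norm (ba_opp x) = ba_norm x.
Proof.
  rewrite <- ba_scalN1, ba_norm_scal, Rabs_Ropp, Rabs_R1, Rmult_1_l; reflexivity.
Qed.

Lemma ba_norm_ge0 (x : A) : 0 <= ba_norm x.
Proof.
  pose proof (ba_norm_tri _ x (ba_opp x)) as H.
  rewrite ba_addN, ba_norm0, ba_normN in H; lra.
Qed.

Lemma ba_norm_subC (x y : A) : ba_norm (ba_sub A x y) = ba_norm (ba_sub A y x).
Proof.
  rewrite <- ba_normN; unfold ba_sub.
  rewrite ba_oppD, ba_oppK, ba_addC; reflexivity.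
Qed.

Lemma ba_norm_le_sub (x y : A) : ba_norm y <= ba_norm x + ba_norm (ba_sub A x y).
Proof.
  assert (E : y = ba_add x (ba_sub A y x)).
  { unfold ba_sub; rewrite (ba_addC _ y), ba_addA, ba_addN, ba_add0l; reflexivity. }
  rewrite E at 1; rewrite ba_norm_subC; apply ba_norm_tri.
Qed.

Lemma ba_eq0_of_norm_small (x : A) :
  (forall e, 0 < e -> ba_norm x <= e) -> x = ba_zero.
Proof.
  intro H; apply ba_norm_eq0; pose proof (ba_norm_ge0 x).
  destruct (Rle_lt_dec (ba_norm x) 0); [lra|].
  specialize (H (ba_norm x / 2)); lra.
Qed.

End BanachAlgebraFacts.

Section Operators.
Context {A : BanachAlgebra}.
Implicit Types U V W : A -> A.

Lemma bounded_linear_sub U x y :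
  bounded_linear A U -> U (ba_sub A x y) = ba_sub A (U x) (U y).
Proof.
  intros [Uadd [Uscal _]]; unfold ba_sub.
  rewrite Uadd, <- !ba_scalN1, Uscal; reflexivity.
Qed.

Lemma bounded_linear_bound U :
  bounded_linear A U -> exists M, 0 <= M /\ forall x, ba_norm (U x) <= M * ba_norm x.
Proof.
  intros [_ [_ [M HM]]]; exists (Rmax M 0); split; [apply Rmax_r|].
  intro x; eapply Rle_trans; [apply HM|].
  apply Rmult_le_compat_r; [apply ba_norm_ge0 | apply Rmax_l].
Qed.

Lemma bounded_linear_ext U V :
  (forall x, U x = V x) -> bounded_linear A V -> bounded_linear A U.
Proof.
  intros E [Vadd [Vscal [M HM]]]; split; [|split].
  - intros; rewrite !E; apply Vadd.
  - intros; rewrite !E; apply Vscal.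
  - exists M; intros; rewrite E; apply HM.
Qed.

Lemma bounded_linear_zero : bounded_linear A (fun _ => ba_zero).
Proof.
  split; [|split].
  - intros; rewrite ba_add0; reflexivity.
  - intros; rewrite ba_scal0r; reflexivity.
  - exists 0; intro; rewrite ba_norm0; lra.
Qed.

Lemma bounded_linear_add U V : bounded_linear A U -> bounded_linear A V ->
  bounded_linear A (fun x => ba_add (U x) (V x)).
Proof.
  intros HU HV.
  destruct (bounded_linear_bound U HU) as [MU [_ HMU]].
  destruct (bounded_linear_bound V HV) as [MV [_ HMV]].
  destruct HU as [Uadd [Uscal _]]; destruct HV as [Vadd [Vscal _]].
  split; [|split].
  - intros; rewrite Uadd, Vadd; apply ba_addACA.
  - intros; rewrite Uscal, Vscal, ba_scalDr; reflexivity.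
  - exists (MU + MV); intro x; eapply Rle_trans; [apply ba_norm_tri|].
    specialize (HMU x); specialize (HMV x); lra.
Qed.

Lemma bounded_linear_scal r U : bounded_linear A U ->
  bounded_linear A (fun x => ba_scal r (U x)).
Proof.
  intros HU; destruct (bounded_linear_bound U HU) as [MU [_ HMU]].
  destruct HU as [Uadd [Uscal _]]; split; [|split].
  - intros; rewrite Uadd, ba_scalDr; reflexivity.
  - intros; rewrite Uscal, !ba_scalA, Rmult_comm; reflexivity.
  - exists (Rabs r * MU); intro x; rewrite ba_norm_scal, Rmult_assoc.
    apply Rmult_le_compat_l; [apply Rabs_pos | apply HMU].
Qed.

Lemma bounded_linear_comp U V : bounded_linear A U -> bounded_linear A V ->
  bounded_linear A (fun x => U (V x)).
Proof.
  intros HU HV.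
  destruct (bounded_linear_bound U HU) as [MU [MU0 HMU]].
  destruct (bounded_linear_bound V HV) as [MV [_ HMV]].
  destruct HU as [Uadd [Uscal _]]; destruct HV as [Vadd [Vscal _]].
  split; [|split].
  - intros; rewrite Vadd, Uadd; reflexivity.
  - intros; rewrite Vscal, Uscal; reflexivity.
  - exists (MU * MV); intro x; eapply Rle_trans; [apply HMU|].
    rewrite Rmult_assoc; apply Rmult_le_compat_l; auto.
Qed.

Lemma opdist_le_refl U e : 0 <= e -> opdist_le A U U e.
Proof.
  intros He x; rewrite ba_subrr, ba_norm0.
  apply Rmult_le_pos; [exact He | apply ba_norm_ge0].
Qed.

Lemma opdist_le_sym U V e : opdist_le A U V e -> opdist_le A V U e.
Proof. intros H x; rewrite ba_norm_subC; apply H. Qed.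

Lemma opdist_le_weaken U V e e' : e <= e' -> opdist_le A U V e -> opdist_le A U V e'.
Proof.
  intros Hee' H x; eapply Rle_trans; [apply H|].
  apply Rmult_le_compat_r; [apply ba_norm_ge0 | exact Hee'].
Qed.

Lemma opdist_le_ext U V W e :
  (forall x, V x = W x) -> opdist_le A U V e -> opdist_le A U W e.
Proof. intros E H x; rewrite <- E; apply H. Qed.

Lemma opdist_le_trans U V W e1 e2 :
  opdist_le A U V e1 -> opdist_le A V W e2 -> opdist_le A U W (e1 + e2).
Proof.
  intros H1 H2 x; rewrite <- (ba_sub_add_sub _ (V x)).
  eapply Rle_trans; [apply ba_norm_tri|].
  specialize (H1 x); specialize (H2 x); lra.
Qed.

Lemma opdist_le_add U U' V V' e1 e2 :
  opdist_le A U U' e1 -> opdist_le A V V' e2 ->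
  opdist_le A (fun x => ba_add (U x) (V x)) (fun x => ba_add (U' x) (V' x)) (e1 + e2).
Proof.
  intros H1 H2 x; rewrite ba_sub_add2.
  eapply Rle_trans; [apply ba_norm_tri|].
  specialize (H1 x); specialize (H2 x); lra.
Qed.

Lemma opdist_le_scal r U U' e : opdist_le A U U' e ->
  opdist_le A (fun x => ba_scal r (U x)) (fun x => ba_scal r (U' x)) (Rabs r * e).
Proof.
  intros H x; rewrite ba_scal_sub, ba_norm_scal, Rmult_assoc.
  apply Rmult_le_compat_l; [apply Rabs_pos | apply H].
Qed.

Lemma opdist_le_norm U U' e M x : opdist_le A U U' e ->
  (forall z, ba_norm (U z) <= M * ba_norm z) -> ba_norm (U' x) <= (M + e) * ba_norm x.
Proof.
  intros H HM; eapply Rle_trans; [apply (ba_norm_le_sub (U x))|].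
  specialize (H x); specialize (HM x); lra.
Qed.

Lemma opdist_le_comp U U' V V' e MU MV :
  bounded_linear A U -> 0 <= MU -> (forall z, ba_norm (U z) <= MU * ba_norm z) ->
  (forall z, ba_norm (V z) <= MV * ba_norm z) -> 0 <= e ->
  opdist_le A U U' e -> opdist_le A V V' e ->
  opdist_le A (fun x => U (V x)) (fun x => U' (V' x)) (e * (MU + MV + e)).
Proof.
  intros HU MU0 HMU HMV e0 HUU' HVV' x; simpl.
  rewrite <- (ba_sub_add_sub _ (U (V' x))).
  eapply Rle_trans; [apply ba_norm_tri|].
  rewrite <- bounded_linear_sub by exact HU.
  assert (D1 : ba_norm (U (ba_sub A (V x) (V' x))) <= MU * (e * ba_norm x)).
  { eapply Rle_trans; [apply HMU|]. apply Rmult_le_compat_l; auto. }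
  assert (D2 : ba_norm (ba_sub A (U (V' x)) (U' (V' x))) <= e * ((MV + e) * ba_norm x)).
  { eapply Rle_trans; [apply HUU'|].
    apply Rmult_le_compat_l; [exact e0 | apply (opdist_le_norm V)]; auto. }
  lra.
Qed.

Lemma opdist_le_all_eq U V :
  (forall e, 0 < e -> opdist_le A U V e) -> forall x, U x = V x.
Proof.
  intros H x; apply ba_sub_eq0, ba_eq0_of_norm_small; intros e He.
  pose proof (ba_norm_ge0 x) as Nx.
  set (d := e / (ba_norm x + 1)).
  assert (Hd : d * (ba_norm x + 1) = e) by (unfold d; field; lra).
  assert (d0 : 0 < d) by (unfold d; apply Rdiv_lt_0_compat; lra).
  specialize (H d d0 x); lra.
Qed.

End Operators.

Lemma exists_small_quadratic (c eps : R) :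
  0 <= c -> 0 < eps -> exists e, 0 < e /\ e * (c + e) <= eps.
Proof.
  intros c0 eps0; set (e := Rmin 1 (eps / (c + 1))).
  assert (e0 : 0 < e) by (apply Rmin_pos; [lra | apply Rdiv_lt_0_compat; lra]).
  assert (e1 : e <= 1) by apply Rmin_l.
  assert (ec : e * (c + 1) <= eps).
  { assert (E : eps / (c + 1) * (c + 1) = eps) by (field; lra).
    rewrite <- E; apply Rmult_le_compat_r; [lra | apply Rmin_r]. }
  exists e; split; [exact e0|].
  apply Rle_trans with (e * (c + 1)); [apply Rmult_le_compat_l|]; lra.
Qed.

Section OperatorNormClosure.
Context {A : BanachAlgebra}.
Variable S : (A -> A) -> Prop.
Implicit Types U V : A -> A.

Lemma op_closure_zero : S (fun _ => ba_zero) -> op_closure A S (fun _ => ba_zero).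
Proof.
  intro S0; split; [apply bounded_linear_zero|].
  intros eps eps0; exists (fun _ => ba_zero); split; [exact S0|].
  apply opdist_le_refl; lra.
Qed.

Lemma op_closure_add U V :
  (forall U V, S U -> S V -> S (fun x => ba_add (U x) (V x))) ->
  op_closure A S U -> op_closure A S V ->
  op_closure A S (fun x => ba_add (U x) (V x)).
Proof.
  intros Sadd [HU CU] [HV CV]; split; [apply bounded_linear_add; auto|].
  intros eps eps0.
  destruct (CU (eps / 2)) as [U' [SU' dU]]; [lra|].
  destruct (CV (eps / 2)) as [V' [SV' dV]]; [lra|].
  exists (fun x => ba_add (U' x) (V' x)); split; [auto|].
  replace eps with (eps / 2 + eps / 2) by field.
  apply opdist_le_add; assumption.
Qed.

Lemma op_closure_scal r U :
  (forall r U, S U -> S (fun x => ba_scal r (U x))) ->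
  op_closure A S U -> op_closure A S (fun x => ba_scal r (U x)).
Proof.
  intros Sscal [HU CU]; split; [apply bounded_linear_scal; auto|].
  intros eps eps0.
  destruct (exists_small_quadratic (Rabs r) eps) as [e [e0 He]];
    [apply Rabs_pos | exact eps0|].
  destruct (CU e e0) as [U' [SU' dU]].
  exists (fun x => ba_scal r (U' x)); split; [auto|].
  apply opdist_le_weaken with (Rabs r * e); [nra|].
  apply opdist_le_scal; exact dU.
Qed.

Lemma op_closure_comp U V :
  (forall U V, S U -> S V -> S (fun x => U (V x))) ->
  op_closure A S U -> op_closure A S V -> op_closure A S (fun x => U (V x)).
Proof.
  intros Scomp [HU CU] [HV CV]; split; [apply bounded_linear_comp; auto|].
  intros eps eps0.
  destruct (bounded_linear_bound U HU) as [MU [MU0 HMU]].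
  destruct (bounded_linear_bound V HV) as [MV [MV0 HMV]].
  destruct (exists_small_quadratic (MU + MV) eps) as [e [e0 He]]; [lra | exact eps0|].
  destruct (CU e e0) as [U' [SU' dU]]; destruct (CV e e0) as [V' [SV' dV]].
  exists (fun x => U' (V' x)); split; [auto|].
  apply opdist_le_weaken with (e * (MU + MV + e)); [lra|].
  apply opdist_le_comp with (MU := MU) (MV := MV); auto; lra.
Qed.

Lemma op_closure_idem U : op_closure A (op_closure A S) U -> op_closure A S U.
Proof.
  intros [HU CU]; split; [exact HU|]; intros eps eps0.
  destruct (CU (eps / 2)) as [V [[_ CV] dUV]]; [lra|].
  destruct (CV (eps / 2)) as [W [SW dVW]]; [lra|].
  exists W; split; [exact SW|].
  replace eps with (eps / 2 + eps / 2) by field.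
  apply opdist_le_trans with V; assumption.
Qed.

Lemma op_closure_comm U V :
  (forall U V, S U -> S V -> forall x, U (V x) = V (U x)) ->
  op_closure A S U -> op_closure A S V -> forall x, U (V x) = V (U x).
Proof.
  intros Scomm [HU CU] [HV CV].
  apply opdist_le_all_eq; intros eps eps0.
  destruct (bounded_linear_bound U HU) as [MU [MU0 HMU]].
  destruct (bounded_linear_bound V HV) as [MV [MV0 HMV]].
  destruct (exists_small_quadratic (MU + MV) (eps / 2)) as [e [e0 He]]; [lra | lra|].
  destruct (CU e e0) as [U' [SU' dU]]; destruct (CV e e0) as [V' [SV' dV]].
  assert (dUV : opdist_le A (fun x => U (V x)) (fun x => V' (U' x)) (e * (MU + MV + e))).
  { apply opdist_le_ext with (fun x => U' (V' x)); [apply Scomm; assumption|].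
    apply opdist_le_comp; auto; lra. }
  assert (dVU : opdist_le A (fun x => V (U x)) (fun x => V' (U' x)) (e * (MU + MV + e))).
  { replace (MU + MV) with (MV + MU) by ring.
    apply opdist_le_comp; auto; lra. }
  apply opdist_le_weaken with (e * (MU + MV + e) + e * (MU + MV + e));
    [lra|].
  apply opdist_le_trans with (fun x => V' (U' x)); [|apply opdist_le_sym]; assumption.
Qed.

Theorem op_closure_commutative_Banach_subalgebra :
  S (fun _ => ba_zero) ->
  (forall U V, S U -> S V -> S (fun x => ba_add (U x) (V x))) ->
  (forall r U, S U -> S (fun x => ba_scal r (U x))) ->
  (forall U V, S U -> S V -> S (fun x => U (V x))) ->
  (forall U V, S U -> S V -> forall x, U (V x) = V (U x)) ->
  is_commutative_Banach_subalgebra A (op_closure A S).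
Proof.
  intros S0 Sadd Sscal Scomp Scomm.
  split; [|split; [|split; [|split; [|split; [|split]]]]].
  - intros U [HU _]; exact HU.
  - apply op_closure_zero, S0.
  - intros; apply op_closure_add; assumption.
  - intros; apply op_closure_scal; assumption.
  - intros; apply op_closure_comp; assumption.
  - apply op_closure_idem.
  - intros; apply op_closure_comm; assumption.
Qed.

End OperatorNormClosure.

(* The case n = 2 of [is_n_multiplier], without boundedness. *)
Definition is_multiplier {A : BanachAlgebra} (U : A -> A) : Prop :=
  (forall x y, U (ba_mul x y) = ba_mul x (U y)) /\
  (forall x y, U (ba_mul x y) = ba_mul (U x) y).

Section Multipliers.
Context {A : BanachAlgebra}.
Implicit Types U T : A -> A.

Lemma multipliers_commute U V :
  left_annihilator_trivial A -> is_multiplier U -> is_multiplier V ->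
  forall z, U (V z) = V (U z).
Proof.
  intros Hann [Ul Ur] [Vl Vr] z.
  assert (UV_mul : forall x y, U (V (ba_mul x y)) = V (U (ba_mul x y))).
  { intros x y; rewrite Vl, Ur, Ur, Vl; reflexivity. }
  apply ba_sub_eq0, Hann; intro b.
  rewrite ba_mul_subl, <- !Ur, <- Vr, <- (Vr (U z)), <- Ur, UV_mul.
  apply ba_subrr.
Qed.

Lemma n_multiplier_zero n : is_n_multiplier A n (fun _ => ba_zero).
Proof.
  split; [apply bounded_linear_zero|].
  intro a; rewrite ba_mul0r, ba_mul0l; split; reflexivity.
Qed.

Lemma n_multiplier_add n T1 T2 :
  is_n_multiplier A n T1 -> is_n_multiplier A n T2 ->
  is_n_multiplier A n (fun x => ba_add (T1 x) (T2 x)).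
Proof.
  intros [HT1 M1] [HT2 M2]; split; [apply bounded_linear_add; assumption|].
  intro a; destruct (M1 a) as [L1 R1]; destruct (M2 a) as [L2 R2].
  split; [rewrite L1, L2, ba_mulDr | rewrite R1, R2, ba_mulDl]; reflexivity.
Qed.

Lemma n_multiplier_scal n r T :
  is_n_multiplier A n T -> is_n_multiplier A n (fun x => ba_scal r (T x)).
Proof.
  intros [HT M]; split; [apply bounded_linear_scal; assumption|].
  intro a; destruct (M a) as [L R].
  split; [rewrite L, ba_scal_mulr | rewrite R, ba_scal_mull]; reflexivity.
Qed.

Lemma multiplier_comp_n_multiplier n U T :
  bounded_linear A U -> is_multiplier U -> is_n_multiplier A n T ->
  is_n_multiplier A n (fun x => U (T x)).
Proof.
  intros HU [Ul Ur] [HT M]; split; [apply bounded_linear_comp; assumption|].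
  intro a; destruct (M a) as [L R].
  split; [rewrite L, Ul | rewrite R, Ur]; reflexivity.
Qed.

Section CentralElement.
Variable a0 : A.
Hypothesis a0_central : in_center A a0.

Lemma prodf_lpow (a : nat -> A) i k m :
  (forall j, (i <= j < i + k)%nat -> a j = a0) ->
  prodf A a i (k + m) = lpow A a0 k (prodf A a (i + k) m).
Proof.
  revert i; induction k as [|k IHk]; intros i Ha; simpl.
  - rewrite Nat.add_0_r; reflexivity.
  - rewrite Ha by lia; rewrite IHk by (intros; apply Ha; lia).
    rewrite Nat.add_succ_r; reflexivity.
Qed.

Lemma lpow_mull k x y : lpow A a0 k (ba_mul x y) = ba_mul x (lpow A a0 k y).
Proof.
  induction k as [|k IHk]; simpl; [reflexivity|].
  rewrite IHk, ba_mulA, a0_central, <- ba_mulA; reflexivity.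
Qed.

Lemma bounded_linear_lpow k : bounded_linear A (lpow A a0 k).
Proof.
  induction k as [|k [Ladd [Lscal [M HM]]]]; split; [| split | | split]; simpl.
  - reflexivity.
  - reflexivity.
  - exists 1; intro x; lra.
  - intros x y; rewrite Ladd, ba_mulDr; reflexivity.
  - intros r x; rewrite Lscal, ba_scal_mulr; reflexivity.
  - exists (ba_norm a0 * M); intro x; eapply Rle_trans; [apply ba_norm_mul|].
    rewrite Rmult_assoc; apply Rmult_le_compat_l; [apply ba_norm_ge0 | apply HM].
Qed.

Lemma n_multiplier_mull m T x y : is_n_multiplier A (S (S m)) T ->
  T (lpow A a0 m (ba_mul x y)) = ba_mul x (T (lpow A a0 m y)).
Proof.
  intros [_ HT].
  set (a := fun j => if j =? 1 then x else if j =? S (S m) then y else a0).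
  assert (a_mid : forall j, (2 <= j < 2 + m)%nat -> a j = a0).
  { intros j Hj; unfold a.
    destruct (Nat.eqb_spec j 1); [lia|].
    destruct (Nat.eqb_spec j (S (S m))); [lia | reflexivity]. }
  assert (ay : a (S (S m)) = y) by (unfold a; simpl; rewrite Nat.eqb_refl; reflexivity).
  destruct (HT a) as [L _].
  replace (S (S m) - 1)%nat with (S (m + 0)) in L by lia.
  replace (S (S m) - 2)%nat with (m + 0)%nat in L by lia.
  change (prodf A a 1 (S (m + 0))) with (ba_mul (a 1%nat) (prodf A a 2 (m + 0))) in L.
  rewrite (prodf_lpow a 2 m 0 a_mid) in L.
  change (prodf A a (2 + m) 0) with (a (S (S m))) in L.
  change (a 1%nat) with x in L; rewrite ay in L.
  rewrite lpow_mull; exact L.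
Qed.

Lemma n_multiplier_mulr m T x y : is_n_multiplier A (S (S m)) T ->
  T (lpow A a0 m (ba_mul x y)) = ba_mul (T (lpow A a0 m x)) y.
Proof.
  intros [_ HT].
  set (a := fun j => if j =? S (S m) then y else if j =? S m then x else a0).
  assert (a_mid : forall j, (1 <= j < 1 + m)%nat -> a j = a0).
  { intros j Hj; unfold a.
    destruct (Nat.eqb_spec j (S (S m))); [lia|].
    destruct (Nat.eqb_spec j (S m)); [lia | reflexivity]. }
  assert (ax : a (S m) = x).
  { unfold a; rewrite (proj2 (Nat.eqb_neq (S m) (S (S m)))) by lia.
    rewrite Nat.eqb_refl; reflexivity. }
  assert (ay : a (S (S m)) = y) by (unfold a; rewrite Nat.eqb_refl; reflexivity).
  destruct (HT a) as [_ R].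
  replace (S (S m) - 1)%nat with (m + 1)%nat in R by lia.
  replace (S (S m) - 2)%nat with (m + 0)%nat in R by lia.
  rewrite !(prodf_lpow a 1 m) in R by exact a_mid.
  change (prodf A a (1 + m) 1) with (ba_mul (a (S m)) (a (S (S m)))) in R.
  change (prodf A a (1 + m) 0) with (a (S m)) in R.
  rewrite ax, ay in R; exact R.
Qed.

Lemma n_multiplier_T_a0n m T :
  is_n_multiplier A (S (S m)) T -> is_multiplier (T_a0n A a0 (S (S m)) T).
Proof.
  intro HT; unfold T_a0n; replace (S (S m) - 2)%nat with m by lia.
  split; intros x y; [apply n_multiplier_mull | apply n_multiplier_mulr]; exact HT.
Qed.

Lemma M_a0n_bounded_linear n U : M_a0n A a0 n U -> bounded_linear A U.
Proof.
  intros [T [[HT _] EU]]; apply (bounded_linear_ext _ _ EU).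
  apply (bounded_linear_comp T); [exact HT | apply bounded_linear_lpow].
Qed.

Lemma M_a0n_multiplier m U : M_a0n A a0 (S (S m)) U -> is_multiplier U.
Proof.
  intros [T [HT EU]]; destruct (n_multiplier_T_a0n m T HT) as [Tl Tr].
  split; intros x y; rewrite !EU; [apply Tl | apply Tr].
Qed.

Lemma M_a0n_zero n : M_a0n A a0 n (fun _ => ba_zero).
Proof. exists (fun _ => ba_zero); split; [apply n_multiplier_zero | reflexivity]. Qed.

Lemma M_a0n_add n U V : M_a0n A a0 n U -> M_a0n A a0 n V ->
  M_a0n A a0 n (fun x => ba_add (U x) (V x)).
Proof.
  intros [T1 [HT1 EU]] [T2 [HT2 EV]].
  exists (fun x => ba_add (T1 x) (T2 x)); split; [apply n_multiplier_add; assumption|].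
  intro x; rewrite EU, EV; reflexivity.
Qed.

Lemma M_a0n_scal n r U : M_a0n A a0 n U -> M_a0n A a0 n (fun x => ba_scal r (U x)).
Proof.
  intros [T [HT EU]].
  exists (fun x => ba_scal r (T x)); split; [apply n_multiplier_scal; assumption|].
  intro x; rewrite EU; reflexivity.
Qed.

Lemma M_a0n_comp m U V : M_a0n A a0 (S (S m)) U -> M_a0n A a0 (S (S m)) V ->
  M_a0n A a0 (S (S m)) (fun x => U (V x)).
Proof.
  intros MU [T [HT EV]].
  exists (fun x => U (T x)); split.
  - apply multiplier_comp_n_multiplier; [| apply (M_a0n_multiplier m) |]; auto.
    apply (M_a0n_bounded_linear (S (S m))); exact MU.
  - intro x; rewrite EV; reflexivity.
Qed.

Lemma M_a0n_comm m U V : left_annihilator_trivial A ->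
  M_a0n A a0 (S (S m)) U -> M_a0n A a0 (S (S m)) V -> forall x, U (V x) = V (U x).
Proof.
  intros Hann MU MV; apply multipliers_commute;
    [exact Hann | apply (M_a0n_multiplier m) ..]; assumption.
Qed.

End CentralElement.
End Multipliers.

Theorem mainTheorem9 (A : BanachAlgebra) (a0 : A) (n : nat) :
  left_annihilator_trivial A ->
  in_center A a0 -> a0 <> ba_zero ->
  (3 <= n)%nat ->
  is_commutative_Banach_subalgebra A (S_n A a0 n).
Proof.
  intros Hann Hc _ Hn.
  destruct n as [|[|m]]; [lia | lia |].
  apply op_closure_commutative_Banach_subalgebra.
  - apply M_a0n_zero.
  - apply M_a0n_add.
  - apply M_a0n_scal.
  - apply M_a0n_comp; exact Hc.
  - intros U V; apply M_a0n_comm; assumption.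
Qed.
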